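(* Fix a labeling $P$. Let $c$ be a command, $\rho,\mu$ states and $\beta$ a boolean such that $|a|_\mu>0$ for every array $a$, $\mathtt b\notin\mathrm{UsedVars}(c)$, and $\rho(\mathtt b)=\mathrm{nat}(\beta)$. If $\langle\mathrm{FiSLH}_P(c),\rho,\mu,\beta\rangle\xrightarrow[D]{O}{}^*\langle c',\rho',\mu',\beta'\rangle$ in the speculative semantics, then there exists $c''$ such that $\langle c,\rho,\mu,\beta\rangle\xrightarrow[D]{O}{}_i^*\langle c'',\rho'[\mathtt b\mapsto\rho(\mathtt b)],\mu',\beta'\rangle$ in the ideal semantics (w.r.t. $P$), and moreover if $c'=\mathtt{skip}$ then $c''=\mathtt{skip}$ and $\rho'(\mathtt b)=\mathrm{nat}(\beta')$.
   Context: Language AWhile: scalar variables $X\in\mathcal V$, arrays $a\in\mathcal A$; $e::=n\mid X\mid\mathrm{op}_{\mathbb N}(e,\dots,e)\mid be\,?\,e_1:e_2$; $be::=\mathtt{true}\mid\mathtt{false}\mid\mathrm{cmp}(e,e)\mid\mathrm{op}_{\mathbb B}(be,\dots,be)$; $c::=\mathtt{skip}\mid X:=e\mid c_1;c_2\mid\mathtt{if}\ be\ \mathtt{then}\ c_1\ \mathtt{else}\ c_2\mid\mathtt{while}\ be\ \mathtt{do}\ c\mid X\leftarrow a[e]\mid a[e]\leftarrow e'$. Scalar state $\rho:\mathcal V\to\mathbb N$; array state $\mu$ with sizes $|a|_\mu$ and values $\mu(a)[i]$; $[\![\cdot]\!]_\rho$ pure evaluation; $\mathrm{nat}(\mathtt{true})=1$,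 $\mathrm{nat}(\mathtt{false})=0$; $\mathrm{UsedVars}(c)$ is the set of scalar variables in $c$; $\mathtt b$ is a reserved scalar variable. Speculative semantics: configurations $\langle c,\rho,\mu,\beta\rangle$; steps labelled by optional observation ($\mathrm{branch}(v)$, $\mathrm{read}(a,i)$, $\mathrm{write}(a,i)$) and optional directive ($\mathit{step},\mathit{force},\mathrm{load}(a',j),\mathrm{store}(a',j)$). $X:=e\to\mathtt{skip}$ with $\rho[X\mapsto[\![e]\!]_\rho]$; $c_1;c_2\to c_1';c_2$ whenever $c_1\to c_1'$ (same labels); $\mathtt{skip};c\to c$; $\mathtt{while}\ be\ \mathtt{do}\ c\to\mathtt{if}\ be\ \mathtt{then}\ (c;\mathtt{while}\ be\ \mathtt{do}\ c)\ \mathtt{else}\ \mathtt{skip}$ (no obs/directive, flag kept). Conditional with $\mathit{step}$: go to branch $v=[\![be]\!]_\rho$; with $\mathit{force}$: go to branch $\neg v$, set $\beta:=\mathtt{true}$; obs $\mathrm{branch}(v)$. Read $X\leftarrow a[ie]$ with $\mathit{step}$: $i=[\![ie]\!]_\rho<|a|_\mu$, $X:=\mu(a)[i]$; with $\mathrm{load}(a',j)$: requires $\beta=\mathtt{true}$, $i\ge|a|_\mu$, $j<|a'|_\mu$, $X:=\mu(a')[j]$; obs $\mathrm{read}(a,i)$. Write $a[ie]\leftarrow ae$ with $\mathit{step}$: $i<|a|_\mu$, $\mu[a[i]\mapsto[\![ae]\!]_\rho]$; with $\mathrm{store}(a',j)$: requires $\beta=\mathtt{true}$, $i\ge|a|_\mu$,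 $j<|a'|_\mu$, $\mu[a'[j]\mapsto[\![ae]\!]_\rho]$; obs $\mathrm{write}(a,i)$. Multi-step $\xrightarrow[D]{O}{}^*$ collects directive list $D$ and observation list $O$. Labels: $\mathtt{true}$=public, $\mathtt{false}$=secret; $P(e)$, $P(be)$ public iff all variables in it are public under $P:\mathcal V\to$ labels. Ideal semantics (w.r.t. $P$), $\xrightarrow[d]{o}{}_i$: identical to the speculative semantics except: conditional rules (both $\mathit{step}$ and $\mathit{force}$) use $v=(P(be)\vee\neg\beta)\wedge[\![be]\!]_\rho$ in place of $[\![be]\!]_\rho$ (both for the chosen branch and the observation); read with $\mathit{step}$ uses index $i=0$ if $(P(ie)=\mathtt{false}\vee P(X)=\mathtt{true})\wedge\beta$ and $i=[\![ie]\!]_\rho$ otherwise; read with $\mathrm{load}$ additionally requires $P(ie)=\mathtt{true}$ and $P(X)=\mathtt{false}$; write with $\mathit{step}$ uses $i=0$ if $(P(ie)=\mathtt{false}\vee P(ae)=\mathtt{false})\wedge\beta$ and $i=[\![ie]\!]_\rho$ otherwise; write with $\mathrm{store}$ additionally requires $P(ie)=\mathtt{true}$ and $P(ae)=\mathtt{true}$. Multi-step $\xrightarrow[D]{O}{}_i^*$ as before. Transformation $\mathrm{FiSLH}_P$: with $m(i)=(\mathtt b==1)\,?\,0:i$ and $B(be)=(\mathtt b==0\ \&\&\ be)$ if $P(be)=\mathtt{false}$, else $be$: $\mathtt{skip}\mapsto\mathtt{skip}$; $X:=e\mapsto X:=e$; $c_1;c_2\mapsto$ translations sequenced; $\mathtt{if}\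 be\ \mathtt{then}\ c_1\ \mathtt{else}\ c_2\mapsto\mathtt{if}\ B(be)\ \mathtt{then}\ (\mathtt b:=B(be)\,?\,\mathtt b:1;[\![c_1]\!])\ \mathtt{else}\ (\mathtt b:=B(be)\,?\,1:\mathtt b;[\![c_2]\!])$; $\mathtt{while}\ be\ \mathtt{do}\ c\mapsto(\mathtt{while}\ B(be)\ \mathtt{do}\ (\mathtt b:=B(be)\,?\,\mathtt b:1;[\![c]\!]));\ \mathtt b:=B(be)\,?\,1:\mathtt b$; $X\leftarrow a[i]\mapsto X\leftarrow a[m(i)]$ if $P(X)=\mathtt{true}$ or $P(i)=\mathtt{false}$, else unchanged; $a[i]\leftarrow e\mapsto a[m(i)]\leftarrow e$ if $P(e)=\mathtt{false}$ or $P(i)=\mathtt{false}$, else unchanged. *)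

From Stdlib Require Import String List Bool Arith.
Import ListNotations.
Open Scope string_scope.

Definition var := string.
Definition arr := string.

Inductive aexp : Type :=
  | ANum (n : nat)
  | AId (X : var)
  | AOp (f : list nat -> nat) (args : list aexp)
  | ACTIf (be : bexp) (e1 e2 : aexp)
with bexp : Type :=
  | BTrue
  | BFalse
  | BCmp (f : nat -> nat -> bool) (e1 e2 : aexp)
  | BOp (f : list bool -> bool) (args : list bexp).

Inductive com : Type :=
  | Skip
  | Asgn (X : var) (e : aexp)
  | Seq (c1 c2 : com)
  | If (be : bexp) (c1 c2 : com)
  | While (be : bexp) (c : com)
  | ARead (X : var) (a : arr) (i : aexp)
  | AWrite (a : arr) (i : aexp) (e : aexp).

Definition reg := var -> nat.
Definition mem := arr -> list nat.

Definition upd_reg (r : reg) (X : var) (n : nat) : reg :=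
  fun Y => if String.eqb X Y then n else r Y.
Definition upd_mem (m : mem) (a : arr) (i n : nat) : mem :=
  fun b => if String.eqb a b then
             (firstn i (m a) ++ n :: skipn (S i) (m a))%list else m b.
Definition asize (m : mem) (a : arr) : nat := length (m a).
Definition aget (m : mem) (a : arr) (i : nat) : nat := nth i (m a) 0.

Fixpoint aeval (r : reg) (e : aexp) : nat :=
  match e with
  | ANum n => n
  | AId X => r X
  | AOp f args => f (map (aeval r) args)
  | ACTIf be e1 e2 => if beval r be then aeval r e1 else aeval r e2
  end
with beval (r : reg) (be : bexp) : bool :=
  match be with
  | BTrue => true
  | BFalse => false
  | BCmp f e1 e2 => f (aeval r e1) (aeval r e2)
  | BOp f args => f (map (beval r) args)
  end.

Definition nat_of_bool (b : bool) : nat := if b then 1 else 0.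

Fixpoint avars (e : aexp) : list var :=
  match e with
  | ANum _ => []
  | AId X => [X]
  | AOp _ args => flat_map avars args
  | ACTIf be e1 e2 => bvars be ++ avars e1 ++ avars e2
  end
with bvars (be : bexp) : list var :=
  match be with
  | BTrue | BFalse => []
  | BCmp _ e1 e2 => avars e1 ++ avars e2
  | BOp _ args => flat_map bvars args
  end.

Fixpoint used_vars (c : com) : list var :=
  match c with
  | Skip => []
  | Asgn X e => X :: avars e
  | Seq c1 c2 => used_vars c1 ++ used_vars c2
  | If be c1 c2 => bvars be ++ used_vars c1 ++ used_vars c2
  | While be c => bvars be ++ used_vars c
  | ARead X _ i => X :: avars i
  | AWrite _ i e => avars i ++ avars e
  end.

(* the reserved misspeculation-flag variable b *)
Definition msf : var := "b".

(* labels: true = public, false = secret *)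
Definition label := bool.
Definition pub_map := var -> label.
Definition label_of_aexp (P : pub_map) (e : aexp) : label := forallb P (avars e).
Definition label_of_bexp (P : pub_map) (be : bexp) : label := forallb P (bvars be).

Inductive observation : Type :=
  | OBranch (v : bool)
  | ORead (a : arr) (i : nat)
  | OWrite (a : arr) (i : nat).
Inductive direction : Type :=
  | DStep
  | DForce
  | DLoad (a : arr) (j : nat)
  | DStore (a : arr) (j : nat).

Definition config : Type := (com * reg * mem * bool)%type.

Inductive spec_step : config -> list direction -> list observation -> config -> Prop :=
  | SP_Asgn : forall X e r m b,
      spec_step (Asgn X e, r, m, b) [] [] (Skip, upd_reg r X (aeval r e), m, b)
  | SP_Seq : forall c1 c1' c2 r m b r' m' b' ds os,
      spec_step (c1, r, m, b) ds os (c1', r', m', b') ->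
      spec_step (Seq c1 c2, r, m, b) ds os (Seq c1' c2, r', m', b')
  | SP_SeqSkip : forall c r m b,
      spec_step (Seq Skip c, r, m, b) [] [] (c, r, m, b)
  | SP_While : forall be c r m b,
      spec_step (While be c, r, m, b) [] []
                (If be (Seq c (While be c)) Skip, r, m, b)
  | SP_If : forall be c1 c2 r m b,
      spec_step (If be c1 c2, r, m, b) [DStep] [OBranch (beval r be)]
                (if beval r be then c1 else c2, r, m, b)
  | SP_If_F : forall be c1 c2 r m b,
      spec_step (If be c1 c2, r, m, b) [DForce] [OBranch (beval r be)]
                (if beval r be then c2 else c1, r, m, true)
  | SP_Read : forall X a ie r m b i,
      i = aeval r ie -> i < asize m a ->
      spec_step (ARead X a ie, r, m, b) [DStep] [ORead a i]
                (Skip, upd_reg r X (aget m a i), m, b)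
  | SP_Read_U : forall X a ie r m i a' j,
      i = aeval r ie -> asize m a <= i -> j < asize m a' ->
      spec_step (ARead X a ie, r, m, true) [DLoad a' j] [ORead a i]
                (Skip, upd_reg r X (aget m a' j), m, true)
  | SP_Write : forall a ie e r m b i,
      i = aeval r ie -> i < asize m a ->
      spec_step (AWrite a ie e, r, m, b) [DStep] [OWrite a i]
                (Skip, r, upd_mem m a i (aeval r e), b)
  | SP_Write_U : forall a ie e r m i a' j,
      i = aeval r ie -> asize m a <= i -> j < asize m a' ->
      spec_step (AWrite a ie e, r, m, true) [DStore a' j] [OWrite a i]
                (Skip, r, upd_mem m a' j (aeval r e), true).

Inductive spec_multi : config -> list direction -> list observation -> config -> Prop :=
  | SM_Refl : forall cf, spec_multi cf [] [] cf
  | SM_Trans : forall cf1 cf2 cf3 ds1 os1 ds2 os2,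
      spec_step cf1 ds1 os1 cf2 ->
      spec_multi cf2 ds2 os2 cf3 ->
      spec_multi cf1 ((ds1 ++ ds2)%list) ((os1 ++ os2)%list) cf3.

Inductive ideal_step (P : pub_map) : config -> list direction -> list observation -> config -> Prop :=
  | ID_Asgn : forall X e r m b,
      ideal_step P (Asgn X e, r, m, b) [] [] (Skip, upd_reg r X (aeval r e), m, b)
  | ID_Seq : forall c1 c1' c2 r m b r' m' b' ds os,
      ideal_step P (c1, r, m, b) ds os (c1', r', m', b') ->
      ideal_step P (Seq c1 c2, r, m, b) ds os (Seq c1' c2, r', m', b')
  | ID_SeqSkip : forall c r m b,
      ideal_step P (Seq Skip c, r, m, b) [] [] (c, r, m, b)
  | ID_While : forall be c r m b,
      ideal_step P (While be c, r, m, b) [] []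
                 (If be (Seq c (While be c)) Skip, r, m, b)
  | ID_If : forall be c1 c2 r m b v,
      v = (label_of_bexp P be || negb b) && beval r be ->
      ideal_step P (If be c1 c2, r, m, b) [DStep] [OBranch v]
                 (if v then c1 else c2, r, m, b)
  | ID_If_F : forall be c1 c2 r m b v,
      v = (label_of_bexp P be || negb b) && beval r be ->
      ideal_step P (If be c1 c2, r, m, b) [DForce] [OBranch v]
                 (if v then c2 else c1, r, m, true)
  | ID_Read : forall X a ie r m b i,
      i = (if (negb (label_of_aexp P ie) || P X) && b then 0 else aeval r ie) ->
      i < asize m a ->
      ideal_step P (ARead X a ie, r, m, b) [DStep] [ORead a i]
                 (Skip, upd_reg r X (aget m a i), m, b)
  | ID_Read_U : forall X a ie r m i a' j,
      i = aeval r ie -> asize m a <= i -> j < asize m a' ->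
      label_of_aexp P ie = true -> P X = false ->
      ideal_step P (ARead X a ie, r, m, true) [DLoad a' j] [ORead a i]
                 (Skip, upd_reg r X (aget m a' j), m, true)
  | ID_Write : forall a ie e r m b i,
      i = (if (negb (label_of_aexp P ie) || negb (label_of_aexp P e)) && b
           then 0 else aeval r ie) ->
      i < asize m a ->
      ideal_step P (AWrite a ie e, r, m, b) [DStep] [OWrite a i]
                 (Skip, r, upd_mem m a i (aeval r e), b)
  | ID_Write_U : forall a ie e r m i a' j,
      i = aeval r ie -> asize m a <= i -> j < asize m a' ->
      label_of_aexp P ie = true -> label_of_aexp P e = true ->
      ideal_step P (AWrite a ie e, r, m, true) [DStore a' j] [OWrite a i]
                 (Skip, r, upd_mem m a' j (aeval r e), true).

Inductive ideal_multi (P : pub_map) : config -> list direction -> list observation -> config -> Prop :=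
  | IM_Refl : forall cf, ideal_multi P cf [] [] cf
  | IM_Trans : forall cf1 cf2 cf3 ds1 os1 ds2 os2,
      ideal_step P cf1 ds1 os1 cf2 ->
      ideal_multi P cf2 ds2 os2 cf3 ->
      ideal_multi P cf1 ((ds1 ++ ds2)%list) ((os1 ++ os2)%list) cf3.

Definition BAnd (b1 b2 : bexp) : bexp :=
  BOp (fun l => match l with [x; y] => x && y | _ => false end) [b1; b2].
Definition BEqN (e1 e2 : aexp) : bexp := BCmp Nat.eqb e1 e2.

Definition mask_idx (i : aexp) : aexp := ACTIf (BEqN (AId msf) (ANum 1)) (ANum 0) i.
Definition guard (P : pub_map) (be : bexp) : bexp :=
  if label_of_bexp P be then be else BAnd (BEqN (AId msf) (ANum 0)) be.

Fixpoint fislh (P : pub_map) (c : com) : com :=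
  match c with
  | Skip => Skip
  | Asgn X e => Asgn X e
  | Seq c1 c2 => Seq (fislh P c1) (fislh P c2)
  | If be c1 c2 =>
      If (guard P be)
         (Seq (Asgn msf (ACTIf (guard P be) (AId msf) (ANum 1))) (fislh P c1))
         (Seq (Asgn msf (ACTIf (guard P be) (ANum 1) (AId msf))) (fislh P c2))
  | While be c =>
      Seq (While (guard P be)
                 (Seq (Asgn msf (ACTIf (guard P be) (AId msf) (ANum 1))) (fislh P c)))
          (Asgn msf (ACTIf (guard P be) (ANum 1) (AId msf)))
  | ARead X a i =>
      if P X || negb (label_of_aexp P i) then ARead X a (mask_idx i) else ARead X a i
  | AWrite a i e =>
      if negb (label_of_aexp P e) || negb (label_of_aexp P i)
      then AWrite a (mask_idx i) e else AWrite a i e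
  end.

From Stdlib Require Import String List Bool Arith Lia FunctionalExtensionality.
Import ListNotations.

(* The source program, run in the ideal semantics, simulates the hardened one
   step by step, with the flag updates of the hardened program as stutter steps.
   The register [msf] mirrors the misspeculation bit: each branch of the
   hardened program first records in [msf] whether its guard [B(be)] was
   mispredicted, and [B(be)] evaluates to exactly the branch value the ideal
   semantics takes.  While [msf = 1], masked indices evaluate to [0], which is in
   bounds because arrays are nonempty, so masked accesses take the in-bounds rule
   at the index the ideal semantics prescribes; the unmasked accesses (secret
   target with public index, or public value with public index) are exactly the
   ones the ideal semantics lets go out of bounds. *)

Lemma upd_reg_eq r x v : upd_reg r x v x = v.
Proof. unfold upd_reg. rewrite String.eqb_refl. reflexivity. Qed.

Lemma upd_reg_neq r x y v : x <> y -> upd_reg r x v y = r y.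
Proof. intros Hxy. unfold upd_reg. apply String.eqb_neq in Hxy. rewrite Hxy. reflexivity. Qed.

Lemma upd_reg_shadow r x v w : upd_reg (upd_reg r x v) x w = upd_reg r x w.
Proof. extensionality y. unfold upd_reg. destruct (String.eqb x y); reflexivity. Qed.

Lemma upd_reg_comm r x y v w : x <> y ->
  upd_reg (upd_reg r x v) y w = upd_reg (upd_reg r y w) x v.
Proof.
  intros Hxy. extensionality z. unfold upd_reg.
  destruct (String.eqb_spec y z), (String.eqb_spec x z); congruence.
Qed.

Lemma upd_reg_same r x : upd_reg r x (r x) = r.
Proof. extensionality y. unfold upd_reg. destruct (String.eqb_spec x y); congruence. Qed.

Fixpoint aeval_upd_notin r x v e {struct e} :
  ~ In x (avars e) -> aeval (upd_reg r x v) e = aeval r e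
with beval_upd_notin r x v be {struct be} :
  ~ In x (bvars be) -> beval (upd_reg r x v) be = beval r be.
Proof.
  - destruct e as [n|Y|f args|be e1 e2]; simpl; intros Hx.
    + reflexivity.
    + apply upd_reg_neq. intros ->. auto.
    + f_equal. induction args as [|e args IH]; simpl in *; [reflexivity|].
      rewrite in_app_iff in Hx.
      rewrite aeval_upd_notin, IH by tauto. reflexivity.
    + rewrite !in_app_iff in Hx.
      rewrite beval_upd_notin, !aeval_upd_notin by tauto. reflexivity.
  - destruct be as [| |f e1 e2|f args]; simpl; intros Hx.
    + reflexivity.
    + reflexivity.
    + rewrite in_app_iff in Hx. rewrite !aeval_upd_notin by tauto. reflexivity.
    + f_equal. induction args as [|be args IH]; simpl in *; [reflexivity|].
      rewrite in_app_iff in Hx.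
      rewrite beval_upd_notin, IH by tauto. reflexivity.
Qed.

Lemma asize_upd_mem m a j n a' : j < asize m a -> asize (upd_mem m a j n) a' = asize m a'.
Proof.
  unfold asize, upd_mem. intros Hj. destruct (String.eqb_spec a a'); subst; [|reflexivity].
  rewrite length_app, length_firstn. cbn [length]. rewrite length_skipn. lia.
Qed.

Lemma spec_step_asize c r m b ds os c' r' m' b' a :
  spec_step (c, r, m, b) ds os (c', r', m', b') -> asize m' a = asize m a.
Proof.
  intros Hstep. remember (c, r, m, b) as cf eqn:Ecf. remember (c', r', m', b') as cf' eqn:Ecf'.
  revert c r m b c' r' m' b' Ecf Ecf'.
  induction Hstep; intros; inversion Ecf; inversion Ecf'; subst; eauto using asize_upd_mem.
Qed.

Section Simulation.

Variable P : pub_map.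

Lemma guard_eval k be r b : r msf = nat_of_bool b -> ~ In msf (bvars be) ->
  beval r (guard P be) = (label_of_bexp P be || negb b) && beval (upd_reg r msf k) be.
Proof.
  intros Hr Hbe. rewrite beval_upd_notin by exact Hbe. unfold guard.
  destruct (label_of_bexp P be); [reflexivity|]. simpl. rewrite Hr. destruct b; reflexivity.
Qed.

Lemma mask_idx_eval r b i : r msf = nat_of_bool b ->
  aeval r (mask_idx i) = if b then 0 else aeval r i.
Proof. intros Hr. simpl. rewrite Hr. destruct b; reflexivity. Qed.

Definition flag_then be := ACTIf (guard P be) (AId msf) (ANum 1).
Definition flag_else be := ACTIf (guard P be) (ANum 1) (AId msf).

Definition fislh_loop be c := While (guard P be) (Seq (Asgn msf (flag_then be)) (fislh P c)).

(* [fislh_sim cs ci r b]: the hardened command [cs] with registers [r] is in step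
   with the source command [ci] under misspeculation bit [b].  Either
   [r msf = nat_of_bool b], or a pending update [Asgn msf e] is about to restore
   it, i.e. [aeval r e = nat_of_bool b]. *)
Inductive fislh_sim : com -> com -> reg -> bool -> Prop :=
| sim_skip r b : r msf = nat_of_bool b -> fislh_sim Skip Skip r b
| sim_asgn X e r b : X <> msf -> ~ In msf (avars e) -> r msf = nat_of_bool b ->
    fislh_sim (Asgn X e) (Asgn X e) r b
| sim_read X a i r b : X <> msf -> ~ In msf (avars i) -> r msf = nat_of_bool b ->
    fislh_sim (fislh P (ARead X a i)) (ARead X a i) r b
| sim_write a i e r b : ~ In msf (avars i) -> ~ In msf (avars e) -> r msf = nat_of_bool b ->
    fislh_sim (fislh P (AWrite a i e)) (AWrite a i e) r b
| sim_if be c1 c2 r b : ~ In msf (bvars be) -> ~ In msf (used_vars c1) ->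
    ~ In msf (used_vars c2) -> r msf = nat_of_bool b ->
    fislh_sim (fislh P (If be c1 c2)) (If be c1 c2) r b
| sim_flag_then e c r b : ~ In msf (used_vars c) -> aeval r e = nat_of_bool b ->
    fislh_sim (Seq (Asgn msf e) (fislh P c)) c r b
| sim_skip_then c r b : ~ In msf (used_vars c) -> r msf = nat_of_bool b ->
    fislh_sim (Seq Skip (fislh P c)) c r b
| sim_seq cs ci c2 r b : fislh_sim cs ci r b -> ~ In msf (used_vars c2) ->
    fislh_sim (Seq cs (fislh P c2)) (Seq ci c2) r b
| sim_while be c r b : ~ In msf (bvars be) -> ~ In msf (used_vars c) ->
    r msf = nat_of_bool b ->
    fislh_sim (fislh P (While be c)) (While be c) r b
| sim_while_if be c r b : ~ In msf (bvars be) -> ~ In msf (used_vars c) ->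
    r msf = nat_of_bool b ->
    fislh_sim (Seq (If (guard P be) (Seq (Seq (Asgn msf (flag_then be)) (fislh P c))
                                         (fislh_loop be c)) Skip)
                   (Asgn msf (flag_else be)))
              (If be (Seq c (While be c)) Skip) r b
| sim_while_body cs ci be c r b : fislh_sim cs ci r b -> ~ In msf (bvars be) ->
    ~ In msf (used_vars c) ->
    fislh_sim (Seq (Seq cs (fislh_loop be c)) (Asgn msf (flag_else be)))
              (Seq ci (While be c)) r b
| sim_skip_exit e r b : aeval r e = nat_of_bool b ->
    fislh_sim (Seq Skip (Asgn msf e)) Skip r b
| sim_flag_exit e r b : aeval r e = nat_of_bool b ->
    fislh_sim (Asgn msf e) Skip r b.

Lemma fislh_sim_fislh c r b : ~ In msf (used_vars c) -> r msf = nat_of_bool b ->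
  fislh_sim (fislh P c) c r b.
Proof.
  revert r b. induction c; simpl; intros r b Hc Hr; rewrite ?in_app_iff in Hc.
  - now constructor.
  - constructor; tauto.
  - apply sim_seq; auto.
  - apply sim_if; tauto.
  - apply sim_while; tauto.
  - apply sim_read; tauto.
  - apply sim_write; rewrite ?in_app_iff; tauto.
Qed.

Definition ideal_step_rc (cf : config) ds os (cf' : config) : Prop :=
  ideal_step P cf ds os cf' \/ (ds = [] /\ os = [] /\ cf = cf').

Lemma ideal_step_rc_seq c1 c1' c2 r m b r' m' b' ds os :
  ideal_step_rc (c1, r, m, b) ds os (c1', r', m', b') ->
  ideal_step_rc (Seq c1 c2, r, m, b) ds os (Seq c1' c2, r', m', b').
Proof.
  intros [Hstep|(-> & -> & Heq)].
  - left. now constructor.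
  - right. injection Heq as -> -> -> ->. auto.
Qed.

(* The value of [msf] seen by the ideal run, which never touches it. *)
Variable k : nat.

Definition simulated_step ci r m b ds os cs' r' m' b' : Prop :=
  exists ci', ideal_step_rc (ci, upd_reg r msf k, m, b) ds os (ci', upd_reg r' msf k, m', b')
              /\ fislh_sim cs' ci' r' b'.

Lemma asgn_simulated X e r m b ds os cs' r' m' b' :
  X <> msf -> ~ In msf (avars e) -> r msf = nat_of_bool b ->
  spec_step (Asgn X e, r, m, b) ds os (cs', r', m', b') ->
  simulated_step (Asgn X e) r m b ds os cs' r' m' b'.
Proof.
  intros HX He Hr Hstep. inversion Hstep; subst. exists Skip. split.
  - left. rewrite upd_reg_comm by congruence.
    rewrite <- (aeval_upd_notin r msf k e) by exact He. constructor.
  - constructor. rewrite upd_reg_neq; congruence.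
Qed.

Lemma mask_idx_in_bounds r m a i : (forall a, 0 < asize m a) -> r msf = nat_of_bool true ->
  aeval r (mask_idx i) < asize m a.
Proof. intros Hpos Hr. rewrite (mask_idx_eval _ _ _ Hr). apply Hpos. Qed.

Lemma read_simulated X a i r m b ds os cs' r' m' b' :
  (forall a, 0 < asize m a) -> X <> msf -> ~ In msf (avars i) -> r msf = nat_of_bool b ->
  spec_step (fislh P (ARead X a i), r, m, b) ds os (cs', r', m', b') ->
  simulated_step (ARead X a i) r m b ds os cs' r' m' b'.
Proof.
  intros Hpos HX Hi Hr Hstep. simpl in Hstep.
  assert (Hidx : aeval (upd_reg r msf k) i = aeval r i) by now apply aeval_upd_notin.
  assert (Hmasked : aeval r (mask_idx i) = if b then 0 else aeval r i) by now apply mask_idx_eval.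
  destruct (P X || negb (label_of_aexp P i)) eqn:Hmask; inversion Hstep; subst;
    [| exfalso; eapply Nat.lt_nge; [eapply mask_idx_in_bounds|]; eassumption | |];
    exists Skip; (split; [left; rewrite upd_reg_comm by congruence
                          | constructor; rewrite upd_reg_neq; congruence]).
  - apply ID_Read; [|assumption]. rewrite Hmasked, Hidx, orb_comm, Hmask. reflexivity.
  - apply orb_false_iff in Hmask as [HPX Hlab]. apply negb_false_iff in Hlab.
    apply ID_Read; [|assumption]. rewrite HPX, Hlab, Hidx. reflexivity.
  - apply orb_false_iff in Hmask as [HPX Hlab]. apply negb_false_iff in Hlab.
    apply ID_Read_U; congruence.
Qed.

Lemma write_simulated a i e r m b ds os cs' r' m' b' :
  (forall a, 0 < asize m a) -> ~ In msf (avars i) -> ~ In msf (avars e) ->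
  r msf = nat_of_bool b ->
  spec_step (fislh P (AWrite a i e), r, m, b) ds os (cs', r', m', b') ->
  simulated_step (AWrite a i e) r m b ds os cs' r' m' b'.
Proof.
  intros Hpos Hi He Hr Hstep. simpl in Hstep.
  assert (Hidx : aeval (upd_reg r msf k) i = aeval r i) by now apply aeval_upd_notin.
  assert (Hval : aeval (upd_reg r msf k) e = aeval r e) by now apply aeval_upd_notin.
  assert (Hmasked : aeval r (mask_idx i) = if b then 0 else aeval r i) by now apply mask_idx_eval.
  destruct (negb (label_of_aexp P e) || negb (label_of_aexp P i)) eqn:Hmask;
    inversion Hstep; subst;
    [| exfalso; eapply Nat.lt_nge; [eapply mask_idx_in_bounds|]; eassumption | |];
    exists Skip; (split; [left; rewrite <- Hval | now constructor]).
  - apply ID_Write; [|assumption]. rewrite Hmasked, Hidx, orb_comm, Hmask. reflexivity.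
  - apply orb_false_iff in Hmask as [He' Hi']. apply negb_false_iff in He', Hi'.
    apply ID_Write; [|assumption]. rewrite He', Hi', Hidx. reflexivity.
  - apply orb_false_iff in Hmask as [He' Hi']. apply negb_false_iff in He', Hi'.
    apply ID_Write_U; congruence.
Qed.

Lemma if_simulated be c1 c2 r m b ds os cs' r' m' b' :
  ~ In msf (bvars be) -> ~ In msf (used_vars c1) -> ~ In msf (used_vars c2) ->
  r msf = nat_of_bool b ->
  spec_step (fislh P (If be c1 c2), r, m, b) ds os (cs', r', m', b') ->
  simulated_step (If be c1 c2) r m b ds os cs' r' m' b'.
Proof.
  intros Hbe Hc1 Hc2 Hr Hstep. pose proof (guard_eval k be r b Hr Hbe) as Hguard.
  inversion Hstep; subst;
    (eexists; split; [left; first [apply ID_If | apply ID_If_F]; exact Hguard |]);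
    destruct (beval _ (guard P be)) eqn:Hv; apply sim_flag_then; simpl; rewrite ?Hv; auto.
Qed.

Lemma flag_then_simulated e c r m b ds os cs' r' m' b' :
  ~ In msf (used_vars c) -> aeval r e = nat_of_bool b ->
  spec_step (Seq (Asgn msf e) (fislh P c), r, m, b) ds os (cs', r', m', b') ->
  simulated_step c r m b ds os cs' r' m' b'.
Proof.
  intros Hc He Hstep. inversion Hstep; subst.
  match goal with H : spec_step (Asgn _ _, _, _, _) _ _ _ |- _ => inversion H; subst end.
  exists c. split.
  - right. rewrite upd_reg_shadow. auto.
  - apply sim_skip_then; [assumption|]. rewrite upd_reg_eq. exact He.
Qed.

Lemma skip_then_simulated c r m b ds os cs' r' m' b' :
  ~ In msf (used_vars c) -> r msf = nat_of_bool b ->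
  spec_step (Seq Skip (fislh P c), r, m, b) ds os (cs', r', m', b') ->
  simulated_step c r m b ds os cs' r' m' b'.
Proof.
  intros Hc Hr Hstep. inversion Hstep; subst.
  - match goal with H : spec_step (Skip, _, _, _) _ _ _ |- _ => inversion H end.
  - exists c. split; [right; auto | now apply fislh_sim_fislh].
Qed.

Lemma while_simulated be c r m b ds os cs' r' m' b' :
  ~ In msf (bvars be) -> ~ In msf (used_vars c) -> r msf = nat_of_bool b ->
  spec_step (fislh P (While be c), r, m, b) ds os (cs', r', m', b') ->
  simulated_step (While be c) r m b ds os cs' r' m' b'.
Proof.
  intros Hbe Hc Hr Hstep. inversion Hstep; subst.
  match goal with H : spec_step (While _ _, _, _, _) _ _ _ |- _ => inversion H; subst end.
  exists (If be (Seq c (While be c)) Skip). split.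
  - left. constructor.
  - now apply sim_while_if.
Qed.

Lemma while_if_simulated be c r m b ds os cs' r' m' b' :
  ~ In msf (bvars be) -> ~ In msf (used_vars c) -> r msf = nat_of_bool b ->
  spec_step (Seq (If (guard P be) (Seq (Seq (Asgn msf (flag_then be)) (fislh P c))
                                       (fislh_loop be c)) Skip)
                 (Asgn msf (flag_else be)), r, m, b) ds os (cs', r', m', b') ->
  simulated_step (If be (Seq c (While be c)) Skip) r m b ds os cs' r' m' b'.
Proof.
  intros Hbe Hc Hr Hstep. pose proof (guard_eval k be r b Hr Hbe) as Hguard.
  inversion Hstep; subst.
  match goal with H : spec_step (If _ _ _, _, _, _) _ _ _ |- _ => inversion H; subst end;
    (eexists; split; [left; first [apply ID_If | apply ID_If_F]; exact Hguard |]);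
    destruct (beval _ (guard P be)) eqn:Hv;
    first [ apply sim_while_body; [apply sim_flag_then|..]
          | apply sim_skip_exit ];
    simpl; rewrite ?Hv; auto.
Qed.

Lemma skip_exit_simulated e r m b ds os cs' r' m' b' :
  aeval r e = nat_of_bool b ->
  spec_step (Seq Skip (Asgn msf e), r, m, b) ds os (cs', r', m', b') ->
  simulated_step Skip r m b ds os cs' r' m' b'.
Proof.
  intros He Hstep. inversion Hstep; subst.
  - match goal with H : spec_step (Skip, _, _, _) _ _ _ |- _ => inversion H end.
  - exists Skip. split; [right; auto | now apply sim_flag_exit].
Qed.

Lemma flag_exit_simulated e r m b ds os cs' r' m' b' :
  aeval r e = nat_of_bool b ->
  spec_step (Asgn msf e, r, m, b) ds os (cs', r', m', b') ->
  simulated_step Skip r m b ds os cs' r' m' b'.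
Proof.
  intros He Hstep. inversion Hstep; subst. exists Skip. split.
  - right. rewrite upd_reg_shadow. auto.
  - apply sim_skip. rewrite upd_reg_eq. exact He.
Qed.

Lemma fislh_sim_skip ci r b : fislh_sim Skip ci r b -> ci = Skip /\ r msf = nat_of_bool b.
Proof.
  intros Hsim. inversion Hsim; subst; auto;
    match goal with H : (if ?t then _ else _) = Skip |- _ => destruct t; discriminate end.
Qed.

Lemma fislh_sim_step cs ci r b : fislh_sim cs ci r b ->
  forall m ds os cs' r' m' b', (forall a, 0 < asize m a) ->
  spec_step (cs, r, m, b) ds os (cs', r', m', b') ->
  simulated_step ci r m b ds os cs' r' m' b'.
Proof.
  induction 1 as [| | | | | | | cs ci c2 r b Hsim IH Hc2 | | | cs ci be c r b Hsim IH Hbe Hc | |];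
    intros m ds os cs' r' m' b' Hpos Hstep.
  - inversion Hstep.
  - eapply asgn_simulated; eassumption.
  - eapply read_simulated; eassumption.
  - eapply write_simulated; eassumption.
  - eapply if_simulated; eassumption.
  - eapply flag_then_simulated; eassumption.
  - eapply skip_then_simulated; eassumption.
  - inversion Hstep; subst.
    + edestruct IH as (ci' & Hideal & Hsim'); [eassumption.. |].
      exists (Seq ci' c2). split; [now apply ideal_step_rc_seq | now apply sim_seq].
    + destruct (fislh_sim_skip _ _ _ Hsim) as [-> Hr].
      exists c2. split; [left; constructor | now apply fislh_sim_fislh].
  - eapply while_simulated; eassumption.
  - eapply while_if_simulated; eassumption.
  - inversion Hstep; subst.
    match goal with H : spec_step (Seq _ _, _, _, _) _ _ _ |- _ => inversion H; subst end.
    + edestruct IH as (ci' & Hideal & Hsim'); [eassumption.. |].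
      exists (Seq ci' (While be c)). split; [now apply ideal_step_rc_seq | now apply sim_while_body].
    + destruct (fislh_sim_skip _ _ _ Hsim) as [-> Hr].
      exists (While be c). split; [left; constructor | now apply sim_while].
  - eapply skip_exit_simulated; eassumption.
  - eapply flag_exit_simulated; eassumption.
Qed.

Lemma fislh_sim_multi cs ci r m b ds os cs' r' m' b' :
  fislh_sim cs ci r b -> (forall a, 0 < asize m a) ->
  spec_multi (cs, r, m, b) ds os (cs', r', m', b') ->
  exists ci', ideal_multi P (ci, upd_reg r msf k, m, b) ds os (ci', upd_reg r' msf k, m', b')
              /\ fislh_sim cs' ci' r' b'.
Proof.
  intros Hsim Hpos Hmulti. remember (cs, r, m, b) as cf eqn:Ecf.
  remember (cs', r', m', b') as cf' eqn:Ecf'.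
  revert cs ci r m b Ecf Hsim Hpos.
  induction Hmulti as [cf|cf1 [[[cs2 r2] m2] b2] cf3 ds1 os1 ds2 os2 Hstep Hmulti IH];
    intros cs ci r m b -> Hsim Hpos; subst.
  - injection Ecf' as -> -> -> ->. exists ci. split; [constructor | assumption].
  - destruct (fislh_sim_step _ _ _ _ Hsim _ _ _ _ _ _ _ Hpos Hstep) as (ci2 & Hideal & Hsim2).
    assert (Hpos2 : forall a, 0 < asize m2 a).
    { intros a. erewrite spec_step_asize by exact Hstep. apply Hpos. }
    destruct (IH eq_refl _ ci2 _ _ _ eq_refl Hsim2 Hpos2) as (ci3 & Hrest & Hsim3).
    exists ci3. split; [|assumption].
    destruct Hideal as [Hideal | (-> & -> & Heq)].
    + econstructor; eassumption.
    + rewrite Heq. exact Hrest.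
Qed.

End Simulation.

Theorem lemma5p1 :
  forall (P : pub_map) (c : com) (r : reg) (m : mem) (b : bool)
         (ds : list direction) (os : list observation)
         (c' : com) (r' : reg) (m' : mem) (b' : bool),
    (forall a : arr, 0 < asize m a) ->
    ~ In msf (used_vars c) ->
    r msf = nat_of_bool b ->
    spec_multi (fislh P c, r, m, b) ds os (c', r', m', b') ->
    exists c'' : com,
      ideal_multi P (c, r, m, b) ds os (c'', upd_reg r' msf (r msf), m', b')
      /\ (c' = Skip -> c'' = Skip /\ r' msf = nat_of_bool b').
Proof.
  intros P c r m b ds os c' r' m' b' Hpos Hc Hr Hmulti.
  destruct (fislh_sim_multi P (r msf) _ c _ _ _ _ _ _ _ _ _
              (fislh_sim_fislh P c r b Hc Hr) Hpos Hmulti) as (c'' & Hideal & Hsim).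
  rewrite upd_reg_same in Hideal.
  exists c''. split; [exact Hideal|].
  intros ->. now apply fislh_sim_skip in Hsim.
Qed.
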